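(* Let $f\in\mathcal{F}_k$ and let $\bar p$ be the uniform distribution on $\mathcal{Y}$. For all $v\in\mathcal{V}$, $\ell_{\text{abs}}^f(v;\bar p)\ge f([k])$. For all $r\in\mathcal{Y}$, $\ell_{\text{abs}}^f(r;\bar p)=2\bar f$, where $\bar f=2^{-k}\sum_{S\subseteq[k]}f(S)$.
   Context: $[k]=\{1,\dots,k\}$, $\mathcal{Y}=\{-1,1\}^k$, $\mathcal{V}=\{-1,0,1\}^k$. $\mathcal{F}_k$: set functions $f:2^{[k]}\to\mathbb{R}$ that are submodular ($f(S)+f(T)\ge f(S\cup T)+f(S\cap T)$), increasing and normalized ($f(\emptyset)=0$). $\ell_{\text{abs}}^f(v,y)=f(\{i:v_iy_i<0\})+f(\{i:v_iy_i\le0\})$ for $v\in\mathcal{V},y\in\mathcal{Y}$, and $\ell_{\text{abs}}^f(v;p)=\sum_yp_y\ell_{\text{abs}}^f(v,y)$. *)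

From HB Require Import structures.
From mathcomp Require Import all_boot all_order all_algebra.
Set Implicit Arguments. Unset Strict Implicit. Unset Printing Implicit Defensive.
Import Order.TTheory GRing.Theory Num.Theory.
Local Open Scope ring_scope.

(* [k] is 'I_k; vectors in R^k with integer entries are {ffun 'I_k -> int}. *)

Definition submodular (R : realFieldType) (k : nat) (f : {set 'I_k} -> R) :=
  forall S T : {set 'I_k}, f (S :|: T) + f (S :&: T) <= f S + f T.
Definition increasing_setfun (R : realFieldType) (k : nat) (f : {set 'I_k} -> R) :=
  forall S T : {set 'I_k}, S \subset T -> f S <= f T.
Definition in_F (R : realFieldType) (k : nat) (f : {set 'I_k} -> R) :=
  [/\ submodular f, increasing_setfun f & f set0 = 0].

Definition in_Y (k : nat) (y : {ffun 'I_k -> int}) :=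
  forall i, y i = 1 \/ y i = -1.
Definition in_V (k : nat) (v : {ffun 'I_k -> int}) :=
  forall i, v i = 1 \/ v i = 0 \/ v i = -1.

(* enumeration of Y through bool-vectors: true |-> 1, false |-> -1 *)
Definition signvec (k : nat) (b : {ffun 'I_k -> bool}) : {ffun 'I_k -> int} :=
  [ffun i => if b i then 1 else -1].

Definition labs (R : realFieldType) (k : nat) (f : {set 'I_k} -> R)
  (v y : {ffun 'I_k -> int}) : R :=
  f [set i | v i * y i < 0] + f [set i | v i * y i <= 0].

(* expected loss under the uniform distribution on Y: p_y = 2^{-k} *)
Definition labs_unif (R : realFieldType) (k : nat) (f : {set 'I_k} -> R)
  (v : {ffun 'I_k -> int}) : R :=
  \sum_(b : {ffun 'I_k -> bool}) (2 ^+ k)^-1 * labs f v (signvec b).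

Definition fbar (R : realFieldType) (k : nat) (f : {set 'I_k} -> R) : R :=
  (2 ^+ k)^-1 * \sum_(S : {set 'I_k}) f S.

From HB Require Import structures.
From mathcomp Require Import all_boot all_order all_algebra.
Import Order.TTheory GRing.Theory Num.Theory.
Local Open Scope ring_scope.

(* Replacing y by -y turns the error sets {i | v_i y_i < 0} and {i | v_i y_i <= 0}
   into the complements of {i | v_i y_i <= 0} and {i | v_i y_i < 0}, so submodularity
   applied to S and ~S gives l(v, y) + l(v, -y) >= 2 f([k]).
   For r in Y both error sets are the set where y disagrees with r, and y maps to
   this set bijectively from Y onto 2^[k]. *)

Lemma ffun_flipK (T : finType) : involutive (fun b : {ffun T -> bool} => [ffun i => ~~ b i]).
Proof. by move=> b; apply/ffunP => i; rewrite !ffunE negbK. Qed.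

Lemma big_set_addb {R : Type} {idx : R} {op : Monoid.com_law idx} {T : finType}
    (c : T -> bool) (F : {set T} -> R) :
  \big[op/idx]_(S : {set T}) F S = \big[op/idx]_(b : {ffun T -> bool}) F [set i | b i (+) c i].
Proof.
apply: (reindex (fun b : {ffun T -> bool} => [set i | b i (+) c i])).
exists (fun S : {set T} => [ffun i => (i \in S) (+) c i]) => [b _ | S _].
- by apply/ffunP => i; rewrite ffunE inE addbK.
- by apply/setP => i; rewrite !inE ffunE addbK.
Qed.

Lemma ler_sum_involutive {R : numDomainType} {T : finType} {g : T -> T} {F : T -> R} {c : R} :
  involutive g -> (forall x, c <= F x + F (g x)) -> c *+ #|T| <= (\sum_x F x) *+ 2.
Proof.
move=> gK Fc; rewrite mulr2n {2}(reindex_inj (inv_inj gK)) -big_split /=.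
by rewrite -sumr_const; apply: ler_sum => x _; apply: Fc.
Qed.

Section AbsLoss.
Variables (R : realFieldType) (k : nat) (f : {set 'I_k} -> R).

Lemma submod_setC_ge (A : {set 'I_k}) :
  submodular f -> f set0 = 0 -> f setT <= f A + f (~: A).
Proof. by move=> fsub f0; have := fsub A (~: A); rewrite setUCr setICr f0 addr0. Qed.

Lemma signvec_flip (b : {ffun 'I_k -> bool}) i :
  signvec [ffun j => ~~ b j] i = - signvec b i.
Proof. by rewrite !ffunE; case: (b i). Qed.

Lemma labs_flip_ge (v : {ffun 'I_k -> int}) (b : {ffun 'I_k -> bool}) :
  submodular f -> f set0 = 0 ->
  f setT *+ 2 <= labs f v (signvec b) + labs f v (signvec [ffun j => ~~ b j]).
Proof.
move=> fsub f0; set lt0 := [set i | v i * signvec b i < 0].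
set le0 := [set i | v i * signvec b i <= 0].
have flip_lt0 : [set i | v i * signvec [ffun j => ~~ b j] i < 0] = ~: le0.
  by apply/setP => i; rewrite !inE signvec_flip mulrN oppr_lt0 ltNge.
have flip_le0 : [set i | v i * signvec [ffun j => ~~ b j] i <= 0] = ~: lt0.
  by apply/setP => i; rewrite !inE signvec_flip mulrN oppr_le0 leNgt.
rewrite /labs flip_lt0 flip_le0 [f (~: _) + _]addrC addrACA mulr2n.
by apply: lerD; apply: submod_setC_ge.
Qed.

Lemma labs_unifE (v : {ffun 'I_k -> int}) :
  labs_unif f v = (2 ^+ k)^-1 * \sum_(b : {ffun 'I_k -> bool}) labs f v (signvec b).
Proof. by rewrite /labs_unif mulr_sumr. Qed.

Lemma labs_unif_ge (v : {ffun 'I_k -> int}) :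
  submodular f -> f set0 = 0 -> f setT <= labs_unif f v.
Proof.
move=> fsub f0; rewrite labs_unifE ler_pdivlMl ?exprn_gt0 // -(ler_pMn2r (isT : (0 < 2)%N)).
have := ler_sum_involutive (@ffun_flipK _) (fun b => labs_flip_ge v b fsub f0).
by rewrite card_ffun card_bool card_ord -mulrnA mulnC mulrnA -[f _ *+ 2 ^ k]mulr_natl natrX.
Qed.

Lemma labs_signvec_Y (r : {ffun 'I_k -> int}) (b : {ffun 'I_k -> bool}) : in_Y r ->
  labs f r (signvec b) = f [set i | b i (+) (r i == 1)] *+ 2.
Proof.
move=> rY; rewrite /labs mulr2n; congr (f _ + f _); apply/setP => i;
by rewrite !inE ffunE; case: (rY i) => ->; case: (b i).
Qed.

Lemma labs_unif_Y (r : {ffun 'I_k -> int}) : in_Y r -> labs_unif f r = 2 * fbar f.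
Proof.
move=> rY; rewrite labs_unifE /fbar mulrCA (big_set_addb (fun i => r i == 1)).
congr (_ * _); rewrite mulr_sumr; apply: eq_bigr => b _.
by rewrite labs_signvec_Y // mulr_natl.
Qed.

End AbsLoss.

Theorem lemma5 (R : realFieldType) (k : nat) (f : {set 'I_k} -> R) :
  in_F f ->
  (forall v : {ffun 'I_k -> int}, in_V v -> f [set: 'I_k] <= labs_unif f v) /\
  (forall r : {ffun 'I_k -> int}, in_Y r -> labs_unif f r = 2 * fbar f).
Proof.
case=> fsub _ f0; split => [v _ | r rY].
- exact: labs_unif_ge.
- exact: labs_unif_Y.
Qed.
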